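(* Let $d\ge1$ and $c_0>0$. There exists $C<\infty$ (depending only on $d$ and $c_0$) such that for all $\epsilon>0$, $\theta>0$ with $\theta\epsilon^2\ge c_0$, all $t\ge0$ and all $x,y\in\mathbb R^d$, $$\big|\psi^{\epsilon,x}_t(y)-p_{\epsilon^2+t}(x,y)\big|\le\frac{C}{(\epsilon^2\theta)^{1/2}}p_{6(\epsilon^2+t)}(x,y)+\frac{C}{(\epsilon^2+t)^{d/2}}\exp(-\epsilon^2\theta/2).$$
   Context: $p_t(x,y)=(2\pi t)^{-d/2}\exp(-\|x-y\|^2/(2t))$ is the heat kernel. $q_\theta(x,dy)$ is the Gaussian distribution with mean $x$ and covariance $\theta^{-1}I$, $\mathcal L^\theta f(x)=\theta\int(f(y)-f(x))q_\theta(x,dy)$, and $\psi^{\epsilon,x}_t$ is the solution of $\partial_t\psi=\mathcal L^\theta\psi$ with $\psi_0(y)=p_{\epsilon^2}(x,y)$; equivalently $\psi^{\epsilon,x}_t(y)=\mathbb E[p_{\epsilon^2+\Pi(\theta t)/\theta}(x,y)]$ for a rate one Poisson process $\Pi$. *)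

From HB Require Import structures.
From mathcomp Require Import all_boot all_order all_algebra.
From mathcomp Require Import all_classical all_reals all_analysis.
Set Implicit Arguments. Unset Strict Implicit. Unset Printing Implicit Defensive.
Import Order.TTheory GRing.Theory Num.Theory.
Local Open Scope ring_scope.

Definition sqdist {R : realType} {d : nat} (x y : 'rV[R]_d) : R :=
  \sum_(i < d) (x ord0 i - y ord0 i) ^+ 2.

Definition heat {R : realType} {d : nat} (t : R) (x y : 'rV[R]_d) : R :=
  powR (2 * pi * t) (- (d%:R / 2)) * expR (- sqdist x y / (2 * t)).

(* psi^{eps,x}_t(y) = E[ p_{eps^2 + Pi(theta t)/theta}(x,y) ], Pi a rate-one
   Poisson process, i.e. Pi(theta t) ~ Poisson(theta t):
   sum_k e^{-theta t} (theta t)^k / k! * p_{eps^2 + k/theta}(x,y). *)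
Definition psi {R : realType} {d : nat} (theta eps t : R) (x y : 'rV[R]_d) : R :=
  limn (fun n => \sum_(0 <= k < n)
     (expR (- (theta * t)) * (theta * t) ^+ k / (k`!)%:R
       * heat (eps ^+ 2 + k%:R / theta) x y)).

From HB Require Import structures.
From mathcomp Require Import all_boot all_order all_algebra.
From mathcomp Require Import all_classical all_reals all_analysis.
From mathcomp Require Import ring lra.

(* With s = eps^2 + t, psi is the mean of the heat kernel at the random time
   Z = eps^2 + K/theta, K ~ Poisson(theta t), whose mean is s.  On [s/2, 3s] the
   kernel is Lipschitz in time with constant of order p_{6s}/s (bound its
   logarithm), and AM-GM with c = (eps^2 theta)^{1/2} gives
   |Z - s|/s <= (c (K - theta t)^2 / (theta s)^2 + 1/c) / 2, whose Poisson mean is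
   at most 1/c because Var K = theta t.  Outside [s/2, 3s], p_s is dominated by
   the same Lipschitz term since |Z - s|/s >= 1/2, while p_Z is at most its
   supremum times e^{theta (Z - 3s)/2} (Z > 3s) or e^{theta (s - 2Z)/2} (Z < s/2),
   factors >= 1 there whose Poisson means are O(e^{-eps^2 theta/2}); for Z < s/2
   the extra decay e^{-theta t/18} also absorbs the ratio (s/eps^2)^{d/2} of the
   suprema, because eps^2 theta >= c0. *)

Set Implicit Arguments.
Unset Strict Implicit.
Unset Printing Implicit Defensive.
Import Order.TTheory GRing.Theory Num.Theory.
Import numFieldNormedType.Exports.
Local Open Scope ring_scope.
Local Open Scope classical_set_scope.

Section poisson_sum.
Context {R : realType}.
Implicit Types (l b c L M : R) (g G : nat -> R).

Definition poisson_weight l k : R := expR (- l) * l ^+ k / k`!%:R.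

Definition poisson_sum l g n : R := \sum_(0 <= k < n) poisson_weight l k * g k.

Lemma poisson_weight_ge0 l k : 0 <= l -> 0 <= poisson_weight l k.
Proof. by move=> l0; rewrite divr_ge0 ?mulr_ge0 ?expR_ge0 ?exprn_ge0. Qed.

Lemma poisson_sumD l g G n :
  poisson_sum l (fun k => g k + G k) n = poisson_sum l g n + poisson_sum l G n.
Proof. by rewrite /poisson_sum -big_split; apply: eq_bigr => k _; rewrite mulrDr. Qed.

Lemma poisson_sumZ l c g n :
  poisson_sum l (fun k => c * g k) n = c * poisson_sum l g n.
Proof. by rewrite /poisson_sum big_distrr /=; apply: eq_bigr => k _; ring. Qed.

Lemma nondecreasing_poisson_sum l g : 0 <= l -> (forall k, 0 <= g k) ->
  nondecreasing_seq (poisson_sum l g).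
Proof.
move=> l0 g0 n m nm; rewrite /poisson_sum (big_cat_nat (leq0n n) nm) /= lerDl.
by apply: sumr_ge0 => k _; rewrite mulr_ge0 ?poisson_weight_ge0.
Qed.

Lemma poisson_sum_le_lim l g L : 0 <= l -> (forall k, 0 <= g k) ->
  poisson_sum l g n @[n --> \oo] --> L -> forall n, poisson_sum l g n <= L.
Proof.
move=> l0 g0 gL n; rewrite -(cvg_lim _ gL) //.
exact: nondecreasing_cvgn_le (nondecreasing_poisson_sum l0 g0) (cvgP _ gL) n.
Qed.

Lemma cvg_poisson_sum_geom l b :
  poisson_sum l (fun k => b ^+ k) n @[n --> \oo] --> expR (l * (b - 1)).
Proof.
have -> : poisson_sum l (fun k => b ^+ k) =
    fun n => expR (- l) * series (exp_coeff (l * b)) n.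
  apply/funext => n; rewrite /poisson_sum /series /= big_distrr /=.
  by apply: eq_bigr => k _; rewrite /poisson_weight /exp_coeff /= exprMn; ring.
rewrite mulrBr mulr1 addrC expRD; apply: cvgMl_tmp.
exact: is_cvg_series_exp_coeff.
Qed.

Lemma cvg_poisson_sum1 l : poisson_sum l (fun=> 1) n @[n --> \oo] --> (1 : R).
Proof.
suff -> : poisson_sum l (fun=> 1) = poisson_sum l (fun k => 1 ^+ k).
  by have := @cvg_poisson_sum_geom l 1; rewrite subrr mulr0 expR0.
by apply/funext => n; apply: eq_bigr => k _; rewrite expr1n.
Qed.

Lemma poisson_sum_natMS l g n :
  poisson_sum l (fun k => k%:R * g k) n.+1 = l * poisson_sum l (fun k => g k.+1) n.
Proof.
rewrite /poisson_sum big_nat_recl //= mul0r mulr0 add0r big_distrr /=.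
apply: eq_bigr => k _; rewrite /poisson_weight factS natrM invfM exprS.
by field; rewrite nat1r !pnatr_eq0 -lt0n fact_gt0.
Qed.

Lemma cvg_poisson_sum_natM l g L :
  poisson_sum l (fun k => g k.+1) n @[n --> \oo] --> L ->
  poisson_sum l (fun k => k%:R * g k) n @[n --> \oo] --> l * L.
Proof.
move=> gL; rewrite -cvg_shiftS.
under eq_fun do rewrite /= poisson_sum_natMS.
exact: cvgMl_tmp.
Qed.

Lemma cvg_poisson_sum_nat l : poisson_sum l (fun k => k%:R) n @[n --> \oo] --> l.
Proof.
suff -> : poisson_sum l (fun k => k%:R) = poisson_sum l (fun k => k%:R * 1).
  by rewrite -[X in _ --> X]mulr1; exact/cvg_poisson_sum_natM/cvg_poisson_sum1.
by apply/funext => n; apply: eq_bigr => k _; rewrite mulr1.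
Qed.

Lemma cvg_poisson_sum_sqr_dev l :
  poisson_sum l (fun k => (k%:R - l) ^+ 2) n @[n --> \oo] --> l.
Proof.
have fact2 : poisson_sum l (fun k => k%:R * (k%:R - 1)) n @[n --> \oo] --> l * l.
  apply: cvg_poisson_sum_natM.
  suff -> : poisson_sum l (fun k => k.+1%:R - 1) = poisson_sum l (fun k => k%:R).
    exact: cvg_poisson_sum_nat.
  by apply/funext => n; apply: eq_bigr => k _; rewrite -addn1 natrD addrK.
have -> : poisson_sum l (fun k => (k%:R - l) ^+ 2) = fun n =>
    poisson_sum l (fun k => k%:R * (k%:R - 1)) n
    + ((1 - 2 * l) * poisson_sum l (fun k => k%:R) n + l ^+ 2 * poisson_sum l (fun=> 1) n).
  apply/funext => n; rewrite -!poisson_sumZ -!poisson_sumD.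
  by apply: eq_bigr => k _; congr (_ * _); ring.
rewrite [X in _ --> X](_ : l = l * l + ((1 - 2 * l) * l + l ^+ 2 * 1)); last by ring.
apply: cvgD => //; apply: cvgD; apply: cvgMl_tmp.
  exact: cvg_poisson_sum_nat.
exact: cvg_poisson_sum1.
Qed.

Lemma poisson_limn_dist_le l g c G M : 0 <= l -> (forall k, 0 <= g k) ->
  (forall k, `|g k - c| <= G k) -> poisson_sum l G n @[n --> \oo] --> M ->
  `|limn (poisson_sum l g) - c| <= M.
Proof.
move=> l0 g0 gG GM; set W := poisson_sum l (fun=> 1).
have G_le_M := poisson_sum_le_lim l0 (fun k => le_trans (normr_ge0 _) (gG k)) GM.
have W_le1 := poisson_sum_le_lim l0 (fun=> ler01) (cvg_poisson_sum1 l).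
have W_ge0 n : 0 <= W n.
  by apply: sumr_ge0 => k _; rewrite mulr1 poisson_weight_ge0.
have dist_le n : `|poisson_sum l g n - c * W n| <= M.
  apply: le_trans (G_le_M n); rewrite -poisson_sumZ /poisson_sum -sumrB.
  apply: le_trans (ler_norm_sum _ _ _) _; apply: ler_sum => k _.
  rewrite -mulrBr mulr1 normrM ger0_norm ?poisson_weight_ge0 //.
  by rewrite ler_wpM2l ?poisson_weight_ge0.
have g_cvg : cvgn (poisson_sum l g).
  apply: nondecreasing_is_cvgn (nondecreasing_poisson_sum l0 g0) _.
  exists (`|c| + M) => _ [n _ <-].
  have cW : c * W n <= `|c|.
    by apply: le_trans (ler_norm _) _; rewrite normrM (ger0_norm (W_ge0 n)) ler_piMr.
  have := ler_norm (poisson_sum l g n - c * W n); have := dist_le n; lra.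
have dist_cvg : `|poisson_sum l g n - c * W n| @[n --> \oo] -->
    `|limn (poisson_sum l g) - c * 1|.
  by apply: cvg_norm; apply: cvgB g_cvg _; exact: cvgMl_tmp (cvg_poisson_sum1 l).
rewrite -[c]mulr1 -(cvg_lim _ dist_cvg) //.
by apply: limr_le; [exact: cvgP dist_cvg | exact: nearW].
Qed.

End poisson_sum.

Section exp_ln_bounds.
Context {R : realType}.
Implicit Types (u v x y s t c D M : R).

Lemma ler_powRN D x y : 0 <= D -> 0 < x -> x <= y -> powR y (- D) <= powR x (- D).
Proof.
move=> D0 x0 xy; have y0 : 0 < y by apply: lt_le_trans xy.
rewrite !powRN lef_pV2 ?posrE ?powR_gt0 //.
by apply: ge0_ler_powR => //; rewrite nnegrE ltW.
Qed.

Lemma powRN_scale D c x : 0 < c -> 0 <= x ->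
  powR x (- D) = powR c D * powR (c * x) (- D).
Proof.
move=> c0 x0; rewrite powRM ?(ltW c0) // mulrA [powR c (- D)]powRN mulfV ?mul1r //.
by rewrite gt_eqF ?powR_gt0.
Qed.

Lemma ler_dist_expR u v M : expR u <= M -> expR v <= M ->
  `|expR u - expR v| <= `|u - v| * M.
Proof.
wlog vu : u v / v <= u.
  move=> H hu hv; have [vu|uv] := leP v u; first exact: H.
  by rewrite distrC (distrC u); apply: H => //; exact: ltW.
move=> uM _; have e_le : expR v <= expR u by rewrite ler_expR.
rewrite !ger0_norm ?subr_ge0 //.
have tangent : expR u * (1 + (v - u)) <= expR v.
  have -> : expR v = expR u * expR (v - u) by rewrite -expRD; congr expR; ring.
  by rewrite ler_pM2l ?expR_gt0 // expR_ge1Dx.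
apply: (@le_trans _ _ ((u - v) * expR u)); first nra.
by rewrite ler_wpM2l // subr_ge0.
Qed.

Lemma ler_dist_ln s t : 0 < s -> s / 2 <= t -> `|ln t - ln s| <= 2 * `|t - s| / s.
Proof.
move=> s0 st; have t0 : 0 < t by lra.
have ln_le_subr1 x : 0 < x -> ln x <= x - 1.
  by move=> x0; have := @le_ln1Dx R (x - 1); rewrite addrCA subrr addr0; apply; lra.
rewrite ler_pdivlMr //.
have [ts|ts] := leP s t.
- have := ln_le_subr1 _ (divr_gt0 t0 s0); rewrite ln_div ?posrE // => ln_le.
  have e : (t / s - 1) * s = t - s by field; rewrite gt_eqF.
  have ln_st : ln s <= ln t by rewrite ler_ln ?posrE.
  rewrite !ger0_norm ?subr_ge0 //; nra.
- have := ln_le_subr1 _ (divr_gt0 s0 t0); rewrite ln_div ?posrE // => ln_le.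
  have e : (s / t - 1) * t = s - t by field; rewrite gt_eqF.
  have ln_ts : ln t <= ln s by rewrite ler_ln ?posrE // ltW.
  rewrite !ler0_norm ?subr_le0 ?(ltW ts) //; nra.
Qed.

Lemma expR_half_le2 : expR (1 / 2) <= 2 :> R.
Proof.
have h1 := @expR_ge1Dx R (- (1 / 2)).
have h2 : expR (1 / 2) * expR (- (1 / 2)) = 1 :> R by rewrite expRxMexpNx_1.
have := @expR_gt0 R (1 / 2); nra.
Qed.

Lemma expRN1_le : expR (-1) <= 4 / 9 :> R.
Proof.
have h1 := @expR_ge1Dx R (1 / 2).
have e : expR 1 = expR (1 / 2) * expR (1 / 2) :> R.
  by rewrite -expRD; congr expR; field.
have h2 : expR 1 * expR (- 1) = 1 :> R by rewrite expRxMexpNx_1.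
have E1 : 9 / 4 <= expR 1 :> R by rewrite e; nra.
have := @expR_gt0 R (-1); nra.
Qed.

Lemma ler_AGM_inv u c : 0 < c -> u <= (c * u ^+ 2 + c^-1) / 2.
Proof.
move=> c0; rewrite -subr_ge0.
have -> : (c * u ^+ 2 + c^-1) / 2 - u = (c * u - 1) ^+ 2 / c / 2.
  by field; rewrite gt_eqF.
by rewrite divr_ge0 // divr_ge0 ?sqr_ge0 // ltW.
Qed.

End exp_ln_bounds.

Section gauss.
Context {R : realType}.
Variables (D r : R).
Hypotheses (D_ge0 : 0 <= D) (r_ge0 : 0 <= r).
Implicit Types s t z : R.

Definition gauss (t : R) : R := powR (2 * pi * t) (- D) * expR (- r / (2 * t)).

Definition log_gauss (t : R) : R := - D * ln (2 * pi * t) - r / (2 * t).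

Lemma gauss_ge0 t : 0 <= gauss t.
Proof. by rewrite mulr_ge0 ?powR_ge0 ?expR_ge0. Qed.

Lemma gauss_le_powR t : 0 < t -> gauss t <= powR (2 * pi * t) (- D).
Proof.
move=> t0; rewrite -[leRHS]mulr1 ler_wpM2l ?powR_ge0 // expR_le1 mulNr oppr_le0.
by rewrite divr_ge0 // mulr_ge0 // ltW.
Qed.

Lemma gaussE t : 0 < t -> gauss t = expR (log_gauss t).
Proof.
move=> t0; rewrite /gauss /powR gt_eqF ?mulr_gt0 ?pi_gt0 // -expRD /log_gauss.
by congr expR; ring.
Qed.

Lemma gauss_le_mid s z : 0 < s -> s / 2 <= z -> z <= 3 * s ->
  gauss z <= powR (pi * s) (- D) * expR (- r / (6 * s)).
Proof.
move=> s0 sz zs; have z0 : 0 < z by lra.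
have pi0 := pi_gt0 R.
apply: ler_pM; rewrite ?powR_ge0 ?expR_ge0 //.
  by apply: ler_powRN => //; [exact: mulr_gt0 | nra].
rewrite ler_expR !mulNr lerN2 ler_pdivrMr ?mulr_gt0 // mulrAC.
(* lra and nra do not see section hypotheses, hence the local copies here and below *)
by rewrite ler_pdivlMr ?mulr_gt0 //; have r0 := r_ge0; nra.
Qed.

Lemma dist_log_gauss s z : 0 < s -> s / 2 <= z ->
  `|log_gauss z - log_gauss s| <= (2 * D + r / s) * (`|z - s| / s).
Proof.
move=> s0 sz; have z0 : 0 < z by lra.
have p0 : 0 < 2 * pi :> R by rewrite mulr_gt0 ?pi_gt0.
have -> : log_gauss z - log_gauss s =
    - D * (ln z - ln s) + r / (2 * z * s) * (z - s).
  rewrite /log_gauss !lnM ?posrE ?pi_gt0 //; field.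
  by rewrite !gt_eqF.
have q_ge0 : 0 <= r / (2 * z * s) by rewrite divr_ge0 // !mulr_ge0 // ltW.
have q_le : r / (2 * z * s) <= r / s / s.
  rewrite -[leRHS]mulrA -invfM ler_wpM2l // lef_pV2 ?posrE ?mulr_gt0 //; nra.
apply: le_trans (ler_normD _ _) _; rewrite [leRHS]mulrDl; apply: lerD.
  have -> : 2 * D * (`|z - s| / s) = D * (2 * `|z - s| / s) by ring.
  by rewrite normrM normrN (ger0_norm D_ge0) ler_wpM2l // ler_dist_ln.
have -> : r / s * (`|z - s| / s) = r / s / s * `|z - s| by ring.
by rewrite normrM ger0_norm // ler_wpM2r.
Qed.

Lemma gauss_lipschitz_mid s z : 0 < s -> s / 2 <= z -> z <= 3 * s ->
  `|gauss z - gauss s| <= powR 12 D * (2 * D + 12) * (`|z - s| / s) * gauss (6 * s).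
Proof.
move=> s0 sz zs; have z0 : 0 < z by lra.
have pi0 := pi_gt0 R.
set M := powR (pi * s) (- D) * expR (- r / (6 * s)).
have M_ge0 : 0 <= M by rewrite mulr_ge0 ?powR_ge0 ?expR_ge0.
have gz := gauss_le_mid s0 sz zs.
have gs : gauss s <= M by apply: gauss_le_mid => //; lra.
rewrite (gaussE z0) (gaussE s0) in gz gs *.
apply: le_trans (ler_dist_expR gz gs) _.
apply: le_trans (ler_wpM2r M_ge0 (dist_log_gauss s0 sz)) _.
set y := r / (12 * s).
have y_ge0 : 0 <= y by rewrite divr_ge0 // mulr_ge0 // ltW.
have y_exp : y * expR (- (2 * y)) <= expR (- y).
  have -> : expR (- (2 * y)) = expR (- y) * expR (- y) by rewrite -expRD; congr expR; ring.
  rewrite mulrA ler_piMl ?expR_ge0 // -(expRxMexpNx_1 y) ler_wpM2r ?expR_ge0 //.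
  by apply: le_trans (expR_ge1Dx y); lra.
have decay : (2 * D + r / s) * expR (- (2 * y)) <= (2 * D + 12) * expR (- y).
  have -> : r / s = 12 * y by rewrite /y; field; rewrite gt_eqF.
  rewrite [leLHS]mulrDl [leRHS]mulrDl; apply: lerD.
    by rewrite ler_wpM2l ?mulr_ge0 // ler_expR; lra.
  by rewrite -mulrA ler_wpM2l.
have scale : M = powR 12 D * powR (2 * pi * (6 * s)) (- D) * expR (- (2 * y)).
  rewrite /M (@powRN_scale _ D 12) ?mulr_ge0 ?(ltW pi0) ?(ltW s0) //.
  have -> : 12 * (pi * s) = 2 * pi * (6 * s) by ring.
  by congr (_ * expR _); rewrite /y; field; rewrite gt_eqF.
set P := `|z - s| / s * powR 12 D * powR (2 * pi * (6 * s)) (- D).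
have P_ge0 : 0 <= P.
  by rewrite /P 2?mulr_ge0 ?powR_ge0 // divr_ge0 // ltW.
have -> : (2 * D + r / s) * (`|z - s| / s) * M
    = P * ((2 * D + r / s) * expR (- (2 * y))) by rewrite scale /P; ring.
have -> : powR 12 D * (2 * D + 12) * (`|z - s| / s) * gauss (6 * s)
    = P * ((2 * D + 12) * expR (- y)).
  rewrite /P /gauss; have -> : - r / (2 * (6 * s)) = - y by rewrite /y; field; rewrite gt_eqF.
  ring.
by rewrite ler_wpM2l.
Qed.

Lemma gauss_le_scale6 s : 0 < s -> gauss s <= powR 6 D * gauss (6 * s).
Proof.
move=> s0; have pi0 := pi_gt0 R.
rewrite /gauss (@powRN_scale _ D 6) ?mulr_ge0 ?(ltW pi0) ?(ltW s0) //.
have -> : 6 * (2 * pi * s) = 2 * pi * (6 * s) by ring.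
rewrite -!mulrA !ler_wpM2l ?powR_ge0 // ler_expR !mulNr lerN2.
rewrite ler_pdivrMr ?mulr_gt0 // mulrAC ler_pdivlMr ?mulr_gt0 //.
by rewrite ler_wpM2l //; lra.
Qed.

Lemma gauss_le_far s z : 0 < s -> 1 / 2 <= `|z - s| / s ->
  gauss s <= powR 12 D * (2 * D + 12) * (`|z - s| / s) * gauss (6 * s).
Proof.
move=> s0 far; apply: le_trans (gauss_le_scale6 s0) _.
rewrite ler_wpM2r ?gauss_ge0 //.
have p6 : powR 6 D <= powR 12 D.
  by apply: (@ge0_ler_powR R D D_ge0 6 12); rewrite ?nnegrE; lra.
have ge1 : 1 <= (2 * D + 12) * (`|z - s| / s).
  have D0 := D_ge0; apply: le_trans (_ : 1 <= 12 * (1 / 2)) _; first lra.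
  by apply: ler_pM => //; lra.
by apply: le_trans p6 _; rewrite -mulrA ler_peMr ?powR_ge0.
Qed.

Lemma gauss_dist_le a s z th : 0 < a -> a <= s -> a <= z -> 0 < th ->
  `|gauss z - gauss s| <= powR 12 D * (2 * D + 12) * (`|z - s| / s) * gauss (6 * s)
    + powR (2 * pi * s) (- D) * expR (th * (z - 3 * s) / 2)
    + powR (2 * pi * a) (- D) * expR (th * (s - 2 * z) / 2).
Proof.
move=> a0 a_s a_z th0; have D0 := D_ge0; have s0 : 0 < s by lra.
have z0 : 0 < z by lra.
have pi0 := pi_gt0 R.
set X := powR 12 D * _ * _ * _; set U := powR _ _ * _; set L := powR _ _ * _.
have X_ge0 : 0 <= X.
  by rewrite /X !mulr_ge0 ?powR_ge0 ?gauss_ge0 ?normr_ge0 ?invr_ge0 ?(ltW s0) //; lra.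
have U_ge0 : 0 <= U by rewrite mulr_ge0 ?powR_ge0 ?expR_ge0.
have L_ge0 : 0 <= L by rewrite mulr_ge0 ?powR_ge0 ?expR_ge0.
have expR_ge1 q : 0 <= q -> 1 <= expR q by move=> q0; apply: le_trans (expR_ge1Dx q); lra.
have [z_lt|z_ge] := ltP z (s / 2).
  have gz : gauss z <= L.
    apply: le_trans (gauss_le_powR z0) _; rewrite /L -[leLHS]mulr1.
    apply: ler_pM; rewrite ?powR_ge0 ?expR_ge1 //; last by rewrite divr_ge0 ?mulr_ge0 //; lra.
    by apply: ler_powRN; rewrite ?mulr_gt0 // ler_pM2l ?mulr_gt0.
  have gs : gauss s <= X.
    by apply: gauss_le_far; rewrite // ler_pdivlMr // ltr0_norm ?subr_lt0; lra.
  apply: le_trans (ler_normB _ _) _; rewrite !ger0_norm ?gauss_ge0 //; lra.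
have [z_le|z_gt] := leP z (3 * s).
  by apply: le_trans (gauss_lipschitz_mid s0 z_ge z_le) _; rewrite -/X; lra.
have gz : gauss z <= U.
  apply: le_trans (gauss_le_powR z0) _; rewrite /U -[leLHS]mulr1.
  apply: ler_pM; rewrite ?powR_ge0 ?expR_ge1 //; last by rewrite divr_ge0 ?mulr_ge0 //; lra.
  by apply: ler_powRN; rewrite ?mulr_gt0 // ler_pM2l ?mulr_gt0 //; lra.
have gs : gauss s <= X.
  by apply: gauss_le_far; rewrite // ler_pdivlMr // ger0_norm ?subr_ge0; lra.
apply: le_trans (ler_normB _ _) _; rewrite !ger0_norm ?gauss_ge0 //; lra.
Qed.

End gauss.

Section tail_bounds.
Context {R : realType}.
Implicit Types (D a th t : R).

Lemma sqr_dev_mean_le a th t : 0 < a -> 0 < th -> 0 <= t ->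
  (Num.sqrt (a * th) / (th * (a + t)) ^+ 2 * (th * t) + (Num.sqrt (a * th))^-1) / 2
    <= (Num.sqrt (a * th))^-1.
Proof.
move=> a0 th0 t0; set c := Num.sqrt (a * th).
have c0 : 0 < c by rewrite sqrtr_gt0 mulr_gt0.
have cc : c ^+ 2 = a * th by rewrite sqr_sqrtr // mulr_ge0 // ltW.
have s0 : 0 < th * (a + t) by rewrite mulr_gt0 //; lra.
suff : c / (th * (a + t)) ^+ 2 * (th * t) <= c^-1 by lra.
rewrite -subr_ge0.
have -> : c^-1 - c / (th * (a + t)) ^+ 2 * (th * t)
    = ((th * (a + t)) ^+ 2 - c ^+ 2 * (th * t)) / (c * (th * (a + t)) ^+ 2).
  by field; rewrite !gt_eqF //; lra.
have -> : (th * (a + t)) ^+ 2 - c ^+ 2 * (th * t) = th ^+ 2 * (a ^+ 2 + a * t + t ^+ 2).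
  by rewrite cc; ring.
by rewrite divr_ge0 ?mulr_ge0 ?exprn_ge0 ?ltW //; nra.
Qed.

Lemma upper_tail_le D a th t : 0 <= D -> 0 < a -> 0 < th -> 0 <= t ->
  powR (2 * pi * (a + t)) (- D) * expR (- (th * t + 2 * (th * (a + t))) / 2)
    * expR (th * t * (expR (1 / 2) - 1))
  <= powR (a + t) (- D) * expR (- (a * th) / 2).
Proof.
move=> D0 a0 th0 t0; have pi2 := @pi_ge2 R.
rewrite -mulrA; apply: ler_pM; rewrite ?powR_ge0 ?mulr_ge0 ?expR_ge0 //.
  by apply: ler_powRN => //; [lra | nra].
rewrite -expRD ler_expR.
have l0 : 0 <= th * t by rewrite mulr_ge0 // ltW.
have : th * t * (expR (1 / 2) - 1) <= th * t.
  by rewrite ler_piMr //; have := @expR_half_le2 R; lra.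
have : 0 <= th * a by rewrite mulr_ge0 ?ltW.
rewrite (mulrC a); lra.
Qed.

Lemma lower_tail_le D (c0 : R) a th t : 0 < D -> 0 < c0 -> 0 < a -> 0 < th -> 0 <= t ->
  c0 <= th * a ->
  powR (2 * pi * a) (- D) * expR (th * (t - a) / 2) * expR (th * t * (expR (-1) - 1))
  <= powR (1 + 18 * D / c0) D * powR (a + t) (- D) * expR (- (a * th) / 2).
Proof.
move=> D0 c00 a0 th0 t0 c0a.
set l := th * t; set s := a + t; set K0 := 1 + 18 * D / c0.
have l0 : 0 <= l by rewrite mulr_ge0 // ltW.
have s0 : 0 < s by rewrite /s; lra.
have K0_ge0 : 0 <= K0 by rewrite /K0 addr_ge0 // divr_ge0 ?mulr_ge0 ?ltW.
have decay : expR (th * (t - a) / 2) * expR (l * (expR (-1) - 1))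
    <= expR (- (a * th) / 2) * expR (- (l / 18)).
  rewrite -!expRD ler_expR.
  have : l * expR (-1) <= l * (4 / 9) by rewrite ler_wpM2l // expRN1_le.
  have -> : th * (t - a) / 2 = l / 2 - a * th / 2 by rewrite /l; ring.
  lra.
have ratio : s / a <= K0 * expR (l / (18 * D)).
  apply: le_trans (_ : _ <= K0 * (1 + l / (18 * D))) _; last first.
    by rewrite ler_wpM2l // expR_ge1Dx.
  rewrite -subr_ge0.
  have -> : K0 * (1 + l / (18 * D)) - s / a =
      18 * D / c0 + l / (18 * D) + t * (th * a - c0) / (c0 * a).
    by rewrite /K0 /l /s; field; rewrite !gt_eqF //; lra.
  by rewrite !addr_ge0 ?divr_ge0 ?mulr_ge0 ?subr_ge0 ?(ltW c00) ?(ltW a0) ?(ltW D0)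
    ?(ltW th0) ?ler0n.
have ratio_pow : powR (s / a) D <= powR K0 D * expR (l / 18).
  apply: le_trans (ge0_ler_powR (ltW D0) _ _ ratio) _; rewrite ?nnegrE.
  - by rewrite divr_ge0 ?ltW.
  - by rewrite mulr_ge0 ?expR_ge0.
  have -> : l / 18 = l / (18 * D) * D by field; rewrite gt_eqF.
  by rewrite powRM ?expR_ge0 // -expRM.
have pow_a : powR (2 * pi * a) (- D) <= powR (s / a) D * powR s (- D).
  rewrite -[in powR s _](divfK (lt0r_neq0 a0) s) -powRN_scale ?divr_gt0 ?(ltW a0) //.
  by apply: ler_powRN; rewrite ?ltW //; have := @pi_ge2 R; nra.
rewrite -mulrA; apply: le_trans (ler_pM _ _ pow_a decay) _;
  rewrite ?powR_ge0 ?mulr_ge0 ?expR_ge0 //.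
have pow_le : powR (s / a) D * expR (- (l / 18)) <= powR K0 D.
  apply: le_trans (ler_wpM2r (expR_ge0 _) ratio_pow) _.
  by rewrite -mulrA expRxMexpNx_1 mulr1.
have -> : powR (s / a) D * powR s (- D) * (expR (- (a * th) / 2) * expR (- (l / 18)))
    = powR s (- D) * expR (- (a * th) / 2) * (powR (s / a) D * expR (- (l / 18))) by ring.
have -> : powR K0 D * powR s (- D) * expR (- (a * th) / 2)
    = powR s (- D) * expR (- (a * th) / 2) * powR K0 D by ring.
by rewrite ler_wpM2l ?mulr_ge0 ?powR_ge0 ?expR_ge0.
Qed.

End tail_bounds.

Section heat_poisson.
Context {R : realType}.
Variables (D r a th t : R).
Hypotheses (D_gt0 : 0 < D) (r_ge0 : 0 <= r) (a_gt0 : 0 < a) (th_gt0 : 0 < th)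
  (t_ge0 : 0 <= t).

(* the bound of gauss_dist_le at z = a + k/th, with AM-GM applied to |z - s|/s *)
Definition dev_majorant (k : nat) : R :=
  powR 12 D * (2 * D + 12) * gauss D r (6 * (a + t))
    * ((Num.sqrt (a * th) / (th * (a + t)) ^+ 2 * (k%:R - th * t) ^+ 2
        + (Num.sqrt (a * th))^-1) / 2)
  + powR (2 * pi * (a + t)) (- D) * expR (- (th * t + 2 * (th * (a + t))) / 2)
    * expR (1 / 2) ^+ k
  + powR (2 * pi * a) (- D) * expR (th * (t - a) / 2) * expR (-1) ^+ k.

Definition dev_majorant_mean : R :=
  powR 12 D * (2 * D + 12) * gauss D r (6 * (a + t))
    * ((Num.sqrt (a * th) / (th * (a + t)) ^+ 2 * (th * t)
        + (Num.sqrt (a * th))^-1) / 2)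
  + powR (2 * pi * (a + t)) (- D) * expR (- (th * t + 2 * (th * (a + t))) / 2)
    * expR (th * t * (expR (1 / 2) - 1))
  + powR (2 * pi * a) (- D) * expR (th * (t - a) / 2) * expR (th * t * (expR (-1) - 1)).

Lemma gauss_poisson_dist_le k :
  `|gauss D r (a + k%:R / th) - gauss D r (a + t)| <= dev_majorant k.
Proof.
have D0 := ltW D_gt0; have a0 := a_gt0; have th0 := th_gt0; have t0 := t_ge0.
have a_z : a <= a + k%:R / th by rewrite lerDl divr_ge0 // ltW.
have a_s : a <= a + t by lra.
apply: le_trans (gauss_dist_le D0 r_ge0 a0 a_s a_z th0) _.
set c := Num.sqrt (a * th); have c0 : 0 < c by rewrite sqrtr_gt0 mulr_gt0.
have s0 : 0 < a + t by lra.
apply: lerD; first apply: lerD.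
- set u := `|k%:R - th * t| / (th * (a + t)).
  have -> : `|a + k%:R / th - (a + t)| / (a + t) = u.
    have -> : a + k%:R / th - (a + t) = (k%:R - th * t) / th by field; rewrite gt_eqF.
    rewrite normrM [`|th^-1|]ger0_norm ?invr_ge0 ?(ltW th0) // /u.
    by field; rewrite !gt_eqF.
  have -> : c / (th * (a + t)) ^+ 2 * (k%:R - th * t) ^+ 2 = c * u ^+ 2.
    by rewrite /u expr_div_n real_normK ?num_real //; field; rewrite !gt_eqF.
  rewrite [leLHS]mulrAC ler_wpM2l ?mulr_ge0 ?powR_ge0 ?gauss_ge0 ?ler_AGM_inv //; lra.
- rewrite -[leRHS]mulrA -expRM_natl -expRD.
  suff -> : th * (a + k%:R / th - 3 * (a + t)) / 2
      = - (th * t + 2 * (th * (a + t))) / 2 + k%:R * (1 / 2) by [].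
  by field; rewrite gt_eqF.
- rewrite -[leRHS]mulrA -expRM_natl -expRD.
  suff -> : th * (a + t - 2 * (a + k%:R / th)) / 2 = th * (t - a) / 2 + k%:R * (-1) by [].
  by field; rewrite gt_eqF.
Qed.

Lemma cvg_poisson_dev_majorant :
  poisson_sum (th * t) dev_majorant n @[n --> \oo] --> dev_majorant_mean.
Proof.
set K := powR 12 D * (2 * D + 12) * gauss D r (6 * (a + t)).
set c := Num.sqrt (a * th); set l := th * t.
set Au := powR (2 * pi * (a + t)) (- D) * expR (- (l + 2 * (th * (a + t))) / 2).
set Al := powR (2 * pi * a) (- D) * expR (th * (t - a) / 2).
have -> : poisson_sum l dev_majorant = fun n =>
    K * c / (th * (a + t)) ^+ 2 / 2 * poisson_sum l (fun k => (k%:R - l) ^+ 2) n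
    + K / c / 2 * poisson_sum l (fun=> 1) n
    + Au * poisson_sum l (fun k => expR (1 / 2) ^+ k) n
    + Al * poisson_sum l (fun k => expR (-1) ^+ k) n.
  apply/funext => n; rewrite -!poisson_sumZ -!poisson_sumD.
  by apply: eq_bigr => k _; congr (_ * _); rewrite /dev_majorant /K /c /l /Au /Al; ring.
have -> : dev_majorant_mean = K * c / (th * (a + t)) ^+ 2 / 2 * l + K / c / 2 * 1
    + Au * expR (l * (expR (1 / 2) - 1)) + Al * expR (l * (expR (-1) - 1)).
  by rewrite /dev_majorant_mean /K /c /l /Au /Al; ring.
apply: cvgD; first apply: cvgD; first apply: cvgD.
all: apply: cvgMl_tmp.
- exact: cvg_poisson_sum_sqr_dev.
- exact: cvg_poisson_sum1.
- exact: cvg_poisson_sum_geom.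
- exact: cvg_poisson_sum_geom.
Qed.

Lemma dev_majorant_mean_le (c0 : R) : 0 < c0 -> c0 <= th * a ->
  dev_majorant_mean <=
    (powR 12 D * (2 * D + 12) + 1 + powR (1 + 18 * D / c0) D) / Num.sqrt (a * th)
      * gauss D r (6 * (a + t))
    + (powR 12 D * (2 * D + 12) + 1 + powR (1 + 18 * D / c0) D) / powR (a + t) D
      * expR (- (a * th) / 2).
Proof.
move=> c0_gt0 c0_le; have D0 := ltW D_gt0.
set K := powR 12 D * (2 * D + 12); set K0 := powR (1 + 18 * D / c0) D.
set c := Num.sqrt (a * th); set g6 := gauss D r (6 * (a + t)).
set P := powR (a + t) (- D); set e := expR (- (a * th) / 2).
have K_ge0 : 0 <= K by rewrite mulr_ge0 ?powR_ge0 //; lra.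
have c_gt0 : 0 < c by rewrite sqrtr_gt0 mulr_gt0.
have g6_ge0 : 0 <= g6 by rewrite gauss_ge0.
have KPe_ge0 : 0 <= K * P * e := mulr_ge0 (mulr_ge0 K_ge0 (powR_ge0 _ _)) (expR_ge0 _).
have mid : K * g6 * ((c / (th * (a + t)) ^+ 2 * (th * t) + c^-1) / 2) <= K / c * g6.
  have := ler_wpM2l (mulr_ge0 K_ge0 g6_ge0) (sqr_dev_mean_le a_gt0 th_gt0 t_ge0).
  by rewrite -/c [leRHS]mulrAC.
have up := upper_tail_le D0 a_gt0 th_gt0 t_ge0.
have low := lower_tail_le D_gt0 c0_gt0 a_gt0 th_gt0 t_ge0 c0_le.
rewrite -/P -/e in up low; rewrite -/K0 in low.
have mid_le : K / c * g6 <= (K + 1 + K0) / c * g6.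
  rewrite ler_wpM2r // ler_wpM2r ?invr_ge0 ?(ltW c_gt0) //.
  by rewrite -addrA lerDl addr_ge0 ?powR_ge0.
rewrite -powRN -/P /dev_majorant_mean -/K -/c -/g6; lra.
Qed.

End heat_poisson.

Lemma heatE {R : realType} {d : nat} (t : R) (x y : 'rV[R]_d) :
  heat t x y = gauss (d%:R / 2) (sqdist x y) t.
Proof. by []. Qed.

Lemma psiE {R : realType} {d : nat} (theta eps t : R) (x y : 'rV[R]_d) :
  psi theta eps t x y = limn (poisson_sum (theta * t)
    (fun k => gauss (d%:R / 2) (sqdist x y) (eps ^+ 2 + k%:R / theta))).
Proof. by []. Qed.

Theorem mainTheorem19 (R : realType) (d : nat) (c0 : R) :
  (1 <= d)%N -> 0 < c0 ->
  exists C : R, forall (eps theta t : R) (x y : 'rV[R]_d),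
    0 < eps -> 0 < theta -> c0 <= theta * eps ^+ 2 -> 0 <= t ->
    `| psi theta eps t x y - heat (eps ^+ 2 + t) x y |
      <= C / Num.sqrt (eps ^+ 2 * theta) * heat (6 * (eps ^+ 2 + t)) x y
         + C / powR (eps ^+ 2 + t) (d%:R / 2) * expR (- (eps ^+ 2 * theta) / 2).
Proof.
move=> d_ge1 c0_gt0; set D : R := d%:R / 2.
have D_gt0 : 0 < D by rewrite divr_gt0 // ltr0n.
exists (powR 12 D * (2 * D + 12) + 1 + powR (1 + 18 * D / c0) D).
move=> eps theta t x y eps_gt0 theta_gt0 c0_le t_ge0.
have a_gt0 : 0 < eps ^+ 2 by rewrite exprn_gt0.
have r_ge0 : 0 <= sqdist x y by apply: sumr_ge0 => i _; rewrite sqr_ge0.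
rewrite psiE !heatE -/D.
apply: le_trans (dev_majorant_mean_le _ D_gt0 a_gt0 theta_gt0 t_ge0 c0_gt0 c0_le).
apply: (poisson_limn_dist_le (G := dev_majorant D (sqdist x y) (eps ^+ 2) theta t)).
- by rewrite mulr_ge0 // ltW.
- by move=> k; exact: gauss_ge0.
- by move=> k; exact: gauss_poisson_dist_le.
- exact: cvg_poisson_dev_majorant.
Qed.
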